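(* Let $\mathcal H\subseteq\mathcal S_+^d$ be a well-structured preconditioner set and let $f:\mathbb R^d\to\mathbb R$ be twice continuously differentiable with $\Lambda_{\mathcal H}(f)<\infty$. Then $$L_{\|\cdot\|_{\mathcal H}}(f)\le\Lambda_{\mathcal H}(f)\le d\cdot L_{\|\cdot\|_{\mathcal H}}(f).$$
   Context: $\mathcal S^d_+$ (resp. $\mathcal S^d_{++}$) denotes the set of real symmetric positive semidefinite (resp. positive definite) $d\times d$ matrices. A set $\mathcal H\subseteq\mathcal S_+^d$ is a well-structured preconditioner set if $\mathcal H=\mathcal S_+^d\cap\mathcal K$ for some set $\mathcal K$ of real $d\times d$ matrices that is closed under scalar multiplication, matrix addition and matrix multiplication and contains the identity $I_d$. For $H\in\mathcal S_+^d$, $\|x\|_H=\sqrt{x^\top Hx}$. The $\mathcal H$-norm is $\|x\|_{\mathcal H}:=\sup_{H\in\mathcal H,\operatorname{Tr}(H)\le 1}\|x\|_H$, and $\|y\|_{\mathcal H,*}:=\sup_{\|x\|_{\mathcal H}\le 1}\langle x,y\rangle$ is its dual norm. For a norm $\|\cdot\|$ with dual norm $\|\cdot\|_*$, $L_{\|\cdot\|}(f)$ is the smallest $L\ge0$ such that $\|\nabla f(x)-\nabla f(y)\|_*\le L\|x-y\|$ for all $x,y$. The adaptive smoothness is $\Lambda_{\mathcal H}(f):=\inf\{\operatorname{Tr}(H): H\in\mathcal H,\ -H\preceq\nabla^2 f(x)\preceq H\ \text{for all }x\in\mathbb R^d\}$. *)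

From HB Require Import structures.
From mathcomp Require Import all_boot all_order all_algebra.
From mathcomp Require Import all_classical all_reals all_analysis.
Set Implicit Arguments. Unset Strict Implicit. Unset Printing Implicit Defensive.
Import Order.TTheory GRing.Theory Num.Theory.
Import numFieldNormedType.Exports.
Local Open Scope classical_set_scope.
Local Open Scope ring_scope.

Section Defs.
Variables (R : realType) (d : nat).

Definition inner (x y : 'cV[R]_d) : R := (x^T *m y) 0 0.

Definition quad (A : 'M[R]_d) (x : 'cV[R]_d) : R := (x^T *m A *m x) 0 0.

Definition psd (A : 'M[R]_d) : Prop :=
  A^T = A /\ forall x : 'cV[R]_d, 0 <= quad A x.

Definition loewner_le (A B : 'M[R]_d) : Prop := psd (B - A).

Definition well_structured (H : set 'M[R]_d) : Prop :=
  exists K : set 'M[R]_d,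
    [/\ (forall (c : R) A, K A -> K (c *: A)),
        (forall A B, K A -> K B -> K (A + B)),
        (forall A B, K A -> K B -> K (A *m B)),
        K 1%:M &
        H = [set A | psd A /\ K A]].

Definition psd_norm (A : 'M[R]_d) (x : 'cV[R]_d) : R := Num.sqrt (quad A x).

Definition Hnorm (H : set 'M[R]_d) (x : 'cV[R]_d) : R :=
  sup [set psd_norm A x | A in [set A | H A /\ \tr A <= 1]].

Definition Hdual (H : set 'M[R]_d) (y : 'cV[R]_d) : R :=
  sup [set inner x y | x in [set x | Hnorm H x <= 1]].

Definition grad (f : 'cV[R]_d -> R) (x : 'cV[R]_d) : 'cV[R]_d :=
  \col_i ('d f x (delta_mx i 0)).

Definition hess (f : 'cV[R]_d -> R) (x : 'cV[R]_d) : 'M[R]_d :=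
  \matrix_(i, j) (('d (grad f) x (delta_mx j 0)) i 0).

Definition C2 (f : 'cV[R]_d -> R) : Prop :=
  (forall x, differentiable f x) /\
  (forall x, differentiable (grad f) x) /\
  continuous (hess f).

(* L_{||.||}(f) : smallest L >= 0 with ||grad f x - grad f y||_* <= L ||x - y||
   (as an extended real; +oo if no such L exists) *)
Definition Lsmooth (nrm dnrm : 'cV[R]_d -> R) (f : 'cV[R]_d -> R) : \bar R :=
  ereal_inf [set (L%:E) | L in [set L : R | 0 <= L /\
     forall x y, dnrm (grad f x - grad f y) <= L * nrm (x - y)]].

Definition adaptive_smoothness (H : set 'M[R]_d) (f : 'cV[R]_d -> R) : \bar R :=
  ereal_inf [set ((\tr A)%:E) | A in [set A | H A /\
     forall x, loewner_le (- A) (hess f x) /\ loewner_le (hess f x) A]].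

End Defs.

From HB Require Import structures.
From mathcomp Require Import all_boot all_order all_algebra.
From mathcomp Require Import all_classical all_reals all_analysis.
From mathcomp Require Import ring lra.
Import Order.TTheory GRing.Theory Num.Theory.
Import numFieldNormedType.Exports.
Set Implicit Arguments. Unset Strict Implicit. Unset Printing Implicit Defensive.
Local Open Scope classical_set_scope.
Local Open Scope ring_scope.

(* For a feasible [A], i.e. [H A] and [-A <= hess f <= A] everywhere, the mean
   value theorem writes [<z, grad f x - grad f y>] as [z^T M (x - y)] with
   [-A <= M <= A]; a discriminant argument bounds this by
   [sqrt (z^T A z) * sqrt (u^T A u)], and since [A / tr A] competes in the
   supremum defining the H-norm, by [tr A * ||x - y||_H] when [||z||_H <= 1].
   Conversely, the H-norm is dominated by the Euclidean norm and the dual H-norm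
   dominates it, so a gradient that is [L]-Lipschitz for the H-norms has a
   Hessian between [-L I] and [L I]; [L I] lies in [H] and has trace [d L]. *)

Lemma discriminant_le (R : realFieldType) (m a b : R) : 0 <= a ->
  (forall t, 2 * t * m <= t ^+ 2 * a + b) -> m ^+ 2 <= a * b.
Proof.
move=> a_ge0; have [->|a_neq0] := eqVneq a 0 => Ht.
  have [->|m_neq0] := eqVneq m 0; first by rewrite expr0n mul0r.
  have := Ht ((b + 1) / (2 * m)); have := Ht 0.
  have -> : 2 * ((b + 1) / (2 * m)) * m = b + 1 by field; rewrite m_neq0.
  rewrite !(mulr0, mul0r, expr0n); lra.
have a_gt0 : 0 < a by rewrite lt_def a_neq0.
have := Ht (m / a).
have -> : 2 * (m / a) * m = 2 * (m ^+ 2 / a) by field.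
have -> : (m / a) ^+ 2 * a = m ^+ 2 / a by field.
by move=> h; rewrite mulrC -ler_pdivrMr //; lra.
Qed.

Lemma ler_of_sqr (R : realDomainType) (b K : R) : 0 <= K -> b ^+ 2 <= K ^+ 2 -> b <= K.
Proof.
move=> K_ge0 bK; apply: le_trans (ler_norm b) _.
by rewrite -ler_sqr ?nnegrE ?normr_ge0 // real_normK ?num_real.
Qed.

Section QuadraticForms.
Variables (R : realType) (d : nat).
Implicit Types (A M : 'M[R]_d) (x y z u w : 'cV[R]_d).

Definition bilform z A u : R := (z^T *m A *m u) 0 0.

Lemma quadE A x : quad A x = bilform x A x. Proof. by []. Qed.

Lemma innerE x y : inner x y = bilform x 1%:M y.
Proof. by rewrite /inner /bilform mulmx1. Qed.

Lemma inner_mulmx z A u : inner z (A *m u) = bilform z A u.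
Proof. by rewrite /inner /bilform mulmxA. Qed.

Lemma bilformDl A z1 z2 u : bilform (z1 + z2) A u = bilform z1 A u + bilform z2 A u.
Proof. by rewrite /bilform linearD !mulmxDl mxE. Qed.

Lemma bilformZl A (t : R) z u : bilform (t *: z) A u = t * bilform z A u.
Proof. by rewrite /bilform linearZ -!scalemxAl mxE. Qed.

Lemma bilformDr A z u1 u2 : bilform z A (u1 + u2) = bilform z A u1 + bilform z A u2.
Proof. by rewrite /bilform !mulmxDr mxE. Qed.

Lemma bilformZr A (t : R) z u : bilform z A (t *: u) = t * bilform z A u.
Proof. by rewrite /bilform -!scalemxAr mxE. Qed.

Lemma bilformBr A z u1 u2 : bilform z A (u1 - u2) = bilform z A u1 - bilform z A u2.
Proof. by rewrite -scaleN1r bilformDr bilformZr mulN1r. Qed.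

Lemma bilformDm A M z u : bilform z (A + M) u = bilform z A u + bilform z M u.
Proof. by rewrite /bilform mulmxDr mulmxDl mxE. Qed.

Lemma bilformZm (c : R) A z u : bilform z (c *: A) u = c * bilform z A u.
Proof. by rewrite /bilform -scalemxAr -scalemxAl mxE. Qed.

Lemma bilformNm A z u : bilform z (- A) u = - bilform z A u.
Proof. by rewrite -scaleN1r bilformZm mulN1r. Qed.

Lemma bilformC A z u : A^T = A -> bilform z A u = bilform u A z.
Proof.
move=> symA; rewrite /bilform -[in LHS](trmxK (z^T *m A *m u)) [in LHS]mxE.
by rewrite !trmx_mul trmxK symA mulmxA.
Qed.

Lemma bilform_delta A i j : bilform (delta_mx i 0) A (delta_mx j 0) = A i j.
Proof. by rewrite /bilform trmx_delta -rowE -colE !mxE. Qed.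

Lemma quad_lincomb A (t s : R) z u :
  quad A (t *: z + s *: u) =
  t ^+ 2 * quad A z + t * s * (bilform z A u + bilform u A z) + s ^+ 2 * quad A u.
Proof. by rewrite !quadE !(bilformDl, bilformDr, bilformZl, bilformZr); ring. Qed.

Lemma quadDm A M w : quad (A + M) w = quad A w + quad M w.
Proof. exact: bilformDm. Qed.

Lemma quadBm A M w : quad (A - M) w = quad A w - quad M w.
Proof. by rewrite quadE bilformDm bilformNm. Qed.

Lemma quadZm (c : R) A w : quad (c *: A) w = c * quad A w.
Proof. exact: bilformZm. Qed.

Lemma quad1 w : quad 1%:M w = inner w w.
Proof. by rewrite quadE innerE. Qed.

(* Positivity of [A +- M] on [t z +- u] for all [t] is a discriminant condition. *)
Lemma bilform_sqr_le A M z u : M^T = M ->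
  (forall w, 0 <= quad (A + M) w) -> (forall w, 0 <= quad (A - M) w) ->
  bilform z M u ^+ 2 <= quad A z * quad A u.
Proof.
move=> symM AMp AMn.
have quadA_ge0 w : 0 <= quad A w.
  by have := AMp w; have := AMn w; rewrite quadBm quadDm; lra.
apply: discriminant_le => // t.
have := AMn (t *: z + 1 *: u); have := AMp (t *: z + (-1) *: u).
rewrite quadBm quadDm !quad_lincomb (bilformC u z symM) sqrrN !expr1n; nra.
Qed.

Lemma inner_sum x y : inner x y = \sum_i x i 0 * y i 0.
Proof. by rewrite /inner mxE; apply: eq_bigr => i _; rewrite mxE. Qed.

Lemma inner_ge0 x : 0 <= inner x x.
Proof. by rewrite inner_sum sumr_ge0 // => i _; rewrite -expr2 sqr_ge0. Qed.

Lemma innerZl (c : R) x y : inner (c *: x) y = c * inner x y.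
Proof. by rewrite !innerE bilformZl. Qed.

Lemma innerZr (c : R) x y : inner x (c *: y) = c * inner x y.
Proof. by rewrite !innerE bilformZr. Qed.

Lemma innerBr z x y : inner z (x - y) = inner z x - inner z y.
Proof. by rewrite !innerE bilformBr. Qed.

Lemma inner0l y : inner 0 y = 0.
Proof. by rewrite /inner trmx0 mul0mx mxE. Qed.

Lemma inner_sqr_le x y : inner x y ^+ 2 <= inner x x * inner y y.
Proof.
rewrite !innerE -!quadE; apply: bilform_sqr_le; first by rewrite trmx1.
  by move=> w; rewrite quadDm quad1; have := inner_ge0 w; lra.
by move=> w; rewrite subrr quadE /bilform mulmx0 mul0mx mxE.
Qed.

Lemma quad_sum A x : quad A x = \sum_i \sum_j x i 0 * A i j * x j 0.
Proof.
rewrite /quad mxE exchange_big /=; apply: eq_bigr => j _.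
by rewrite mxE big_distrl /=; apply: eq_bigr => i _; rewrite mxE.
Qed.

Lemma psd1 : psd (1%:M : 'M[R]_d).
Proof. by split=> [|x]; rewrite ?trmx1 // quad1 inner_ge0. Qed.

Lemma psdZ (c : R) A : 0 <= c -> psd A -> psd (c *: A).
Proof.
move=> c_ge0 [symA A_ge0]; split=> [|x]; first by rewrite linearZ /= symA.
by rewrite quadZm mulr_ge0.
Qed.

Lemma psd_diag_ge0 A i : psd A -> 0 <= A i i.
Proof. by case=> _ /(_ (delta_mx i 0)); rewrite quadE bilform_delta. Qed.

Lemma psd_mxtrace_ge0 A : psd A -> 0 <= \tr A.
Proof. by move=> psdA; apply: sumr_ge0 => i _; exact: psd_diag_ge0. Qed.

(* [A] is nonnegative on [x_j e_i - x_i e_j]. *)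
Lemma psd_cross_le A x i j : psd A ->
  2 * (x i 0 * A i j * x j 0) <= x i 0 ^+ 2 * A j j + x j 0 ^+ 2 * A i i.
Proof.
case=> symA /(_ (x j 0 *: delta_mx i 0 + (- x i 0) *: delta_mx j 0)).
have Aji : A j i = A i j by rewrite -[in LHS]symA mxE.
by rewrite quad_lincomb !quadE !bilform_delta Aji; nra.
Qed.

Lemma mxtrace_dim0 A : d = 0%N -> \tr A = 0.
Proof.
by move=> d0; apply: big1 => i _; move: (ltn_ord i); rewrite [X in (_ < X)%N]d0.
Qed.

Lemma psd_quad_le_mxtrace A x : psd A -> quad A x <= \tr A * inner x x.
Proof.
move=> psdA.
have trE : \tr A * inner x x = \sum_i \sum_j x i 0 ^+ 2 * A j j.
  rewrite inner_sum mulrC big_distrl /=; apply: eq_bigr => i _.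
  by rewrite mulr_sumr; apply: eq_bigr => j _; rewrite expr2.
suff : 2 * quad A x <= 2 * (\tr A * inner x x) by rewrite ler_pM2l.
have -> : 2 * (\tr A * inner x x) =
    \sum_i \sum_j (x i 0 ^+ 2 * A j j + x j 0 ^+ 2 * A i i).
  under eq_bigr do rewrite big_split /=.
  by rewrite big_split /= [X in _ + X]exchange_big /= -trE mulr_natl mulr2n.
rewrite quad_sum mulr_sumr; apply: ler_sum => i _.
by rewrite mulr_sumr; apply: ler_sum => j _; exact: psd_cross_le.
Qed.

Definition enorm x : R := Num.sqrt (inner x x).

Lemma enormZ (c : R) x : enorm (c *: x) = `|c| * enorm x.
Proof. by rewrite /enorm innerZl innerZr mulrA -expr2 sqrtrM ?sqr_ge0 // sqrtr_sqr. Qed.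

Lemma enorm0 : enorm 0 = 0.
Proof. by rewrite /enorm inner0l sqrtr0. Qed.

Lemma abs_inner_le x y : `|inner x y| <= enorm x * enorm y.
Proof.
rewrite -sqrtrM ?inner_ge0 // -sqrtr_sqr ler_wsqrtr //; exact: inner_sqr_le.
Qed.

End QuadraticForms.

Section PreconditionerNorms.
Variables (R : realType) (d : nat) (H : set 'M[R]_d).
Hypothesis wsH : well_structured H.
Implicit Types (A : 'M[R]_d) (x g : 'cV[R]_d).

Lemma ws_psd A : H A -> psd A.
Proof. by case: wsH => K [_ _ _ _ ->] []. Qed.

Lemma ws_scale (c : R) A : 0 <= c -> H A -> H (c *: A).
Proof.
case: wsH => K [KZ _ _ _ ->] c_ge0 [psdA KA].
by split; [exact: psdZ | exact: KZ].
Qed.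

Lemma ws_scale1 (c : R) : 0 <= c -> H (c *: 1%:M).
Proof.
move=> c_ge0; apply: ws_scale => //.
by case: wsH => K [_ _ _ K1 ->]; split; [exact: psd1 | exact: K1].
Qed.

Let unit_norms x := [set psd_norm A x | A in [set A | H A /\ \tr A <= 1]].

Lemma unit_norms_ub x : ubound (unit_norms x) (enorm x).
Proof.
move=> _ [A [HA trA] <-]; apply: ler_wsqrtr.
apply: le_trans (psd_quad_le_mxtrace x (ws_psd HA)) _.
by rewrite ler_piMl // inner_ge0.
Qed.

Lemma unit_norms0 x : unit_norms x 0.
Proof.
exists (0 *: 1%:M); first by split; [exact: ws_scale1 | rewrite scale0r mxtrace0].
by rewrite /psd_norm quadZm mul0r sqrtr0.
Qed.

Lemma Hnorm_le_enorm x : Hnorm H x <= enorm x.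
Proof. by apply: ge_sup; [exists 0; exact: unit_norms0 | exact: unit_norms_ub]. Qed.

Lemma psd_norm_le_Hnorm A x : H A -> \tr A <= 1 -> psd_norm A x <= Hnorm H x.
Proof.
move=> HA trA; apply: ub_le_sup; first by exists (enorm x); exact: unit_norms_ub.
by exists A.
Qed.

Lemma Hnorm_ge0 x : 0 <= Hnorm H x.
Proof.
apply: ub_le_sup; first by exists (enorm x); exact: unit_norms_ub.
exact: unit_norms0.
Qed.

Lemma quad_le_Hnorm A x : H A -> quad A x <= \tr A * Hnorm H x ^+ 2.
Proof.
move=> HA; have psdA := ws_psd HA.
have [tr0|tr_neq0] := eqVneq (\tr A) 0.
  by have := psd_quad_le_mxtrace x psdA; rewrite tr0 !mul0r.
have tr_gt0 : 0 < \tr A by rewrite lt_def tr_neq0 psd_mxtrace_ge0.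
have HA1 : H ((\tr A)^-1 *: A) by apply: ws_scale; rewrite ?invr_ge0 ?ltW.
have trA1 : \tr ((\tr A)^-1 *: A) <= 1 by rewrite mxtraceZ mulVf.
have := psd_norm_le_Hnorm x HA1 trA1; rewrite /psd_norm quadZm => le_sqrt.
rewrite -ler_pdivrMl // -ler_sqrt ?exprn_ge0 ?Hnorm_ge0 //.
by rewrite sqrtr_sqr ger0_norm ?Hnorm_ge0.
Qed.

Lemma inner_le_Hnorm x : inner x x <= d%:R * Hnorm H x ^+ 2.
Proof.
rewrite -quad1 -(mxtrace1 R d); apply: quad_le_Hnorm.
by rewrite -[1%:M]scale1r; exact: ws_scale1.
Qed.

Let unit_duals g := [set inner x g | x in [set x | Hnorm H x <= 1]].

Lemma unit_duals_ub g : ubound (unit_duals g) (Num.sqrt d%:R * enorm g).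
Proof.
move=> _ [x Hx1 <-]; apply: le_trans (ler_norm _) _.
apply: le_trans (abs_inner_le x g) _; apply: ler_wpM2r; first exact: sqrtr_ge0.
apply: ler_wsqrtr; apply: le_trans (inner_le_Hnorm x) _.
by have Hx_ge0 := Hnorm_ge0 x; rewrite ler_piMr // expr_le1.
Qed.

Lemma Hdual_ge g x : Hnorm H x <= 1 -> inner x g <= Hdual H g.
Proof.
move=> Hx1; apply: ub_le_sup; last by exists x.
by exists (Num.sqrt d%:R * enorm g); exact: unit_duals_ub.
Qed.

Lemma Hnorm0_le1 : Hnorm H 0 <= 1.
Proof. by rewrite (le_trans (Hnorm_le_enorm 0)) // enorm0. Qed.

Lemma Hdual_le g B : (forall x, Hnorm H x <= 1 -> inner x g <= B) -> Hdual H g <= B.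
Proof.
move=> ubB; apply: ge_sup; first by exists (inner 0 g), 0 => //; exact: Hnorm0_le1.
by move=> _ [x Hx1 <-]; exact: ubB.
Qed.

Lemma enorm_le_Hdual g : enorm g <= Hdual H g.
Proof.
have [g0|g_neq0] := eqVneq (enorm g) 0.
  by rewrite g0 -(inner0l g); exact: Hdual_ge Hnorm0_le1.
have g_gt0 : 0 < enorm g by rewrite lt_def g_neq0 sqrtr_ge0.
have Hx1 : Hnorm H ((enorm g)^-1 *: g) <= 1.
  by rewrite (le_trans (Hnorm_le_enorm _)) // enormZ gtr0_norm ?invr_gt0 // mulVf.
apply: le_trans (Hdual_ge g Hx1).
by rewrite innerZl -[inner g g]sqr_sqrtr ?inner_ge0 // -/(enorm g) expr2 mulKf.
Qed.

End PreconditionerNorms.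

Section Calculus.
Variables (R : realType) (d : nat).
Implicit Types (f : 'cV[R]_d -> R) (x y z u v : 'cV[R]_d).

Lemma diff_gradE f x u : 'd (grad f) x u = hess f x *m u.
Proof.
apply/matrixP => i j; rewrite ord1 {1}(matrix_sum_delta u) linear_sum summxE mxE.
by apply: eq_bigr => k _; rewrite big_ord1 linearZ mxE /hess mxE mulrC.
Qed.

Section Lines.
Variables (V : normedModType R) (G : 'cV[R]_d -> V) (u y : 'cV[R]_d) (t : R).

Let line_quotient :
  (fun h : R => h^-1 *: (((fun s : R => G (s *: u + y)) \o shift t) h%:A - G (t *: u + y))) =
  (fun h : R => h^-1 *: ((G \o shift (t *: u + y)) (h *: u) - G (t *: u + y))).
Proof. by apply: funext => h /=; rewrite [h%:A]mulr1 scalerDl addrA. Qed.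

Lemma derive_line : 'D_1 (fun s : R => G (s *: u + y)) t = 'D_u G (t *: u + y).
Proof. by rewrite /derive line_quotient. Qed.

Lemma derivable_line :
  derivable (fun s : R => G (s *: u + y)) t 1 = derivable G (t *: u + y) u.
Proof. by rewrite /derivable line_quotient. Qed.

End Lines.

Lemma is_derive_grad_line f u y t : differentiable (grad f) (t *: u + y) ->
  is_derive t 1 (fun s => grad f (s *: u + y)) (hess f (t *: u + y) *m u).
Proof.
move=> diff_grad; split; first by rewrite derivable_line; exact: diff_derivable.
by rewrite derive_line deriveE // diff_gradE.
Qed.

Lemma is_derive_inner (g : R -> 'cV[R]_d) z (t : R) v :
  is_derive t 1 g v -> is_derive t 1 (fun s => inner z (g s)) (inner z v).
Proof.
move=> [derivable_g derive_g].
have entry i : is_derive t 1 (fun s => g s i 0) (v i 0).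
  split; first by move/derivable_mxP: derivable_g; apply.
  by rewrite -derive_g (derive_mx derivable_g) mxE.
have -> : (fun s => inner z (g s)) = \sum_i (z i 0 \*: fun s => g s i 0).
  by apply: funext => s; rewrite fct_sumE inner_sum; apply: eq_bigr.
rewrite inner_sum; apply: is_derive_sum => i; exact: is_deriveZ.
Qed.

End Calculus.

Definition hess_sandwich (R : realType) (d : nat) (f : 'cV[R]_d -> R) (A : 'M[R]_d) :=
  forall x, loewner_le (- A) (hess f x) /\ loewner_le (hess f x) A.

Lemma hess_sandwich_scalar (R : realType) (d : nat) (f : 'cV[R]_d -> R) (L : R) :
  (forall x, (hess f x)^T = hess f x) ->
  (forall x v, `|quad (hess f x) v| <= L * inner v v) ->
  hess_sandwich f (L *: 1%:M).
Proof.
move=> sym_hess hessL x; split; split.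
- by rewrite opprK linearD /= sym_hess linearZ /= trmx1.
- move=> w; rewrite opprK quadDm quadZm quad1.
  by have := hessL x w; rewrite ler_norml => /andP[? _]; lra.
- by rewrite linearD /= linearN /= sym_hess linearZ /= trmx1.
- move=> w; rewrite quadBm quadZm quad1.
  by have := hessL x w; rewrite ler_norml => /andP[_ ?]; lra.
Qed.

Section HessianBounds.
Variables (R : realType) (d : nat) (f : 'cV[R]_d -> R).
Hypothesis diff_grad : forall x, differentiable (grad f) x.
Implicit Types (A : 'M[R]_d) (x y z u v : 'cV[R]_d).

Lemma hess_sandwich_sym A : A^T = A -> hess_sandwich f A ->
  forall x, (hess f x)^T = hess f x.
Proof.
move=> symA sandA x; have [[symB _] _] := sandA x.
by move: symB; rewrite opprK linearD /= symA => /addIr.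
Qed.

Lemma inner_grad_sub_mvt z x y :
  exists p, inner z (grad f x - grad f y) = bilform z (hess f p) (x - y).
Proof.
set u := x - y; pose phi s := inner z (grad f (s *: u + y)).
have phi' (s : R) : is_derive s 1 phi (bilform z (hess f (s *: u + y)) u).
  by rewrite -inner_mulmx; apply/is_derive_inner/is_derive_grad_line.
have dphi (s : R) : derivable phi s 1 by case: (phi' s).
have [c _ mvt] := MVT ltr01 (fun s _ => phi' s)
  (derivable_within_continuous (fun s _ => dphi s)).
exists (c *: u + y); move: mvt; rewrite subr0 mulr1 /phi innerBr.
by rewrite scale1r scale0r add0r /u subrK.
Qed.

Lemma Hdual_grad_sub_le (H : set 'M[R]_d) A x y : well_structured H -> H A ->
  hess_sandwich f A -> Hdual H (grad f x - grad f y) <= \tr A * Hnorm H (x - y).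
Proof.
move=> wsH HA sandA; apply: Hdual_le => // z Hz1.
have [p ->] := inner_grad_sub_mvt z x y.
have [symA quadA_ge0] := ws_psd wsH HA.
have [[_ lowA] [_ upA]] := sandA p.
have Hz_ge0 := Hnorm_ge0 wsH z; have Hu_ge0 := Hnorm_ge0 wsH (x - y).
have tr_ge0 := psd_mxtrace_ge0 (ws_psd wsH HA).
have quadAz : quad A z <= \tr A.
  apply: le_trans (quad_le_Hnorm wsH z HA) _.
  by rewrite ler_piMr // expr_le1.
have quadAu := quad_le_Hnorm wsH (x - y) HA.
have bil_le : bilform z (hess f p) (x - y) ^+ 2 <= quad A z * quad A (x - y).
  apply: bilform_sqr_le (hess_sandwich_sym symA sandA p) _ upA => w.
  by have := lowA w; rewrite opprK addrC.
apply: ler_of_sqr; first exact: mulr_ge0.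
apply: le_trans bil_le _; apply: le_trans (ler_wpM2r (quadA_ge0 _) quadAz) _.
by rewrite exprMn expr2 -mulrA; exact: ler_wpM2l.
Qed.

Lemma quad_hess_abs_le (L : R) :
  (forall x y, enorm (grad f x - grad f y) <= L * enorm (x - y)) ->
  forall x v, `|quad (hess f x) v| <= L * inner v v.
Proof.
move=> lipL x v; pose phi s := inner v (grad f (s *: v + x)).
have phi' : is_derive (0 : R) 1 phi (quad (hess f x) v).
  rewrite quadE -inner_mulmx -[in hess f x](add0r x) -(scale0r v).
  exact/is_derive_inner/is_derive_grad_line.
have quotient_le (h : R) : h != 0 ->
    `|h^-1 *: ((phi \o shift 0) (h *: 1) - phi 0)| <= L * inner v v.
  move=> h_neq0; rewrite /= addr0 [h%:A]mulr1 /phi scale0r add0r -innerBr.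
  rewrite normrZ normfV ler_pdivrMl ?normr_gt0 //.
  apply: le_trans (abs_inner_le _ _) _.
  rewrite -[inner v v]sqr_sqrtr ?inner_ge0 // -/(enorm v).
  have := lipL (h *: v + x) x; rewrite addrK enormZ => lip_hv.
  apply: le_trans (ler_wpM2l (sqrtr_ge0 _) lip_hv) _.
  by rewrite -/(enorm v) [leRHS](_ : _ = enorm v * (L * (`|h| * enorm v))) //; ring.
have [phi_cvg <-] := phi'.
have quotient_near : \forall h \near 0^',
    `|h^-1 *: ((phi \o shift 0) (h *: 1) - phi 0)| <= L * inner v v.
  by near=> h; apply: quotient_le; near: h; exact: nbhs_dnbhs_neq.
rewrite /derive ler_norml; apply/andP; split; [apply: limr_ge | apply: limr_le] => //;
  by apply: filterS quotient_near => h; rewrite ler_norml => /andP[].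
Unshelve. all: by end_near.
Qed.

End HessianBounds.

Section AdaptiveSmoothness.
Variables (R : realType) (d : nat) (H : set 'M[R]_d) (f : 'cV[R]_d -> R).
Hypotheses (wsH : well_structured H) (diff_grad : forall x, differentiable (grad f) x).

Lemma adaptive_smoothness_feasible : (adaptive_smoothness H f < +oo)%E ->
  exists2 A, H A & hess_sandwich f A.
Proof.
move=> Lam_fin; apply: contrapT => no_feasible; move: Lam_fin.
suff -> : adaptive_smoothness H f = +oo%E by rewrite ltxx.
by apply/ereal_inf_pinfty => _ [A [HA sandA] <-]; case: no_feasible; exists A.
Qed.

Lemma adaptive_smoothness_le_mxtrace A : H A -> hess_sandwich f A ->
  (adaptive_smoothness H f <= (\tr A)%:E)%E.
Proof. by move=> HA sandA; apply: ereal_inf_lbound; exists A. Qed.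

Lemma Lsmooth_le_adaptive_smoothness :
  (Lsmooth (Hnorm H) (Hdual H) f <= adaptive_smoothness H f)%E.
Proof.
apply: le_ereal_inf_tmp => _ [A [HA sandA] <-]; apply: ereal_inf_lbound.
exists (\tr A) => //; split; first exact: psd_mxtrace_ge0 (ws_psd wsH HA).
by move=> x y; exact: Hdual_grad_sub_le.
Qed.

Lemma adaptive_smoothness_le_Lsmooth A : (0 < d)%N -> H A -> hess_sandwich f A ->
  (adaptive_smoothness H f <= d%:R%:E * Lsmooth (Hnorm H) (Hdual H) f)%E.
Proof.
move=> d_gt0 HA sandA; rewrite /Lsmooth -ereal_inf_pZl ?ltr0n //.
apply: le_ereal_inf_tmp => _ [_ [L [L_ge0 lipL] <-] <-].
have -> : ((d%:R)%:E * L%:E)%E = (\tr (L *: 1%:M : 'M[R]_d))%:E.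
  by rewrite -EFinM mxtraceZ mxtrace1 mulrC.
apply: adaptive_smoothness_le_mxtrace; first exact: ws_scale1.
apply: hess_sandwich_scalar; first exact: hess_sandwich_sym (ws_psd wsH HA).1 sandA.
apply: quad_hess_abs_le => // x y.
apply: le_trans (enorm_le_Hdual wsH _) _; apply: le_trans (lipL x y) _.
by rewrite ler_wpM2l // Hnorm_le_enorm.
Qed.

End AdaptiveSmoothness.

Theorem proposition2p1 (R : realType) (d : nat) (H : set 'M[R]_d)
  (f : 'cV[R]_d -> R) :
  well_structured H -> C2 f -> (adaptive_smoothness H f < +oo)%E ->
  (Lsmooth (Hnorm H) (Hdual H) f <= adaptive_smoothness H f)%E /\
  (adaptive_smoothness H f <= (d%:R)%:E * Lsmooth (Hnorm H) (Hdual H) f)%E.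
Proof.
move=> wsH [_ [diff_grad _]] Lam_fin.
have [A HA sandA] := adaptive_smoothness_feasible Lam_fin.
split; first exact: Lsmooth_le_adaptive_smoothness.
have [d0|d_gt0] := posnP d; last exact: adaptive_smoothness_le_Lsmooth HA sandA.
have -> : (d%:R : R) = 0 by rewrite d0.
by rewrite mul0e (le_trans (adaptive_smoothness_le_mxtrace HA sandA)) // mxtrace_dim0.
Qed.
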